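(* Let $(\{0,1\}^{\mathbb N},\mathbb B_\Pi,m,\sigma)$ be an ergodic Markov shift over two symbols, $X$ a lexicographic-like random variable, $d\in\mathbb N$, $O=\bigcup_{n=0}^\infty\sigma^{-n}(\{\overline0\})$ with $\overline0=(0,0,\dots)$, and $\widetilde{\mathcal P}^X(d)=\{P\setminus O\mid P\in\mathcal P^X(d)\}\cup\{O\}$. Then for every $P\in\widetilde{\mathcal P}^X(d)\setminus\{O\}$ there are $a_0,\dots,a_{d-1}\in\{0,1\}$ with $P\subseteq C_{a_0a_1\dots a_{d-1}}$.
   Context: Markov shift over $\{0,1\}$: given a $2\times2$ stochastic matrix $Q=(q_{ij})$ and a stationary probability vector $p$ with positive entries, the system on one-sided sequences $s=(s_0,s_1,\dots)\in\{0,1\}^{\mathbb N}$ with $\sigma$-algebra $\mathbb B_\Pi$ generated by cylinders $C_{a_0\dots a_{n-1}}=\{s:s_i=a_i,i<n\}$, shift $(\sigma s)_j=s_{j+1}$ and $m(C_{a_0\dots a_{n-1}})=p_{a_0}q_{a_0a_1}\cdots q_{a_{n-2}a_{n-1}}$; ergodic means every $\sigma$-invariant set has measure $0$ or $1$. Lexicographic order: $r\prec s$ iff $r_0<s_0$ or there is $k\in\mathbb N$ with $r_i=s_i$ for $i<k$ and $r_k<s_k$. $X$ is lexicographic-like if it is injective on a set of full $m$-measure and for all $s$ and $j,n\in\mathbb N_0$: $X(\sigma^j s)\le X(\sigma^n s)$ iff $\sigma^j s\preceq\sigma^n s$. Ordinal pattern: $(x_0,\dots,x_d)$ has pattern $\pi=(r_0,\dots,r_d)\in\Pi_d$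 (permutations of $\{0,\dots,d\}$) if $x_{r_0}\ge\dots\ge x_{r_d}$ and $r_{l-1}>r_l$ whenever $x_{r_{l-1}}=x_{r_l}$. The ordinal partition $\mathcal P^X(d)$ consists of the sets $P_\pi=\{s:(X(\sigma^d s),\dots,X(\sigma s),X(s))\text{ has ordinal pattern }\pi\}$, $\pi\in\Pi_d$. *)

(* Markov shifts over {0,1} (false = 0, true = 1). *)
From Stdlib Require Import Reals List Permutation.
Import ListNotations.
Open Scope R_scope.

Definition seqs := nat -> bool.

Definition shift (s : seqs) : seqs := fun j => s (S j).
Fixpoint shiftn (n : nat) (s : seqs) : seqs :=
  match n with O => s | S k => shift (shiftn k s) end.

Definition cylinder (a : list bool) (s : seqs) : Prop :=
  forall i, (i < length a)%nat -> s i = nth i a false.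

Inductive measurable : (seqs -> Prop) -> Prop :=
| meas_cyl : forall a, measurable (cylinder a)
| meas_compl : forall A, measurable A -> measurable (fun s => ~ A s)
| meas_union : forall A : nat -> seqs -> Prop,
    (forall n, measurable (A n)) -> measurable (fun s => exists n, A n s)
| meas_ext : forall A B, measurable A -> (forall s, A s <-> B s) -> measurable B.

Fixpoint trans_weight (Q : bool -> bool -> R) (a0 : bool) (l : list bool) : R :=
  match l with
  | [] => 1
  | b :: l' => Q a0 b * trans_weight Q b l'
  end.
Definition cyl_weight (p : bool -> R) (Q : bool -> bool -> R) (a : list bool) : R :=
  match a with
  | [] => 1
  | a0 :: l => p a0 * trans_weight Q a0 l
  end.

Definition stochastic (Q : bool -> bool -> R) : Prop :=
  (forall i j, 0 <= Q i j) /\ (forall i, Q i false + Q i true = 1).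

Definition stationary_pos (p : bool -> R) (Q : bool -> bool -> R) : Prop :=
  (forall i, 0 < p i) /\ p false + p true = 1 /\
  (forall j, p j = p false * Q false j + p true * Q true j).

(* mu is a (countably additive) probability measure on B_Pi which agrees with the
   Markov formula on cylinders; by Caratheodory such a measure exists and is unique,
   so mu is the Markov measure m. *)
Definition markov_measure (p : bool -> R) (Q : bool -> bool -> R)
    (mu : (seqs -> Prop) -> R) : Prop :=
  (forall A, measurable A -> 0 <= mu A) /\
  (forall A : nat -> seqs -> Prop,
     (forall n, measurable (A n)) ->
     (forall n k s, n <> k -> A n s -> A k s -> False) ->
     infinite_sum (fun n => mu (A n)) (mu (fun s => exists n, A n s))) /\
  (forall a, mu (cylinder a) = cyl_weight p Q a).

Definition ergodic (mu : (seqs -> Prop) -> R) : Prop :=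
  forall A, measurable A -> (forall s, A (shift s) <-> A s) -> mu A = 0 \/ mu A = 1.

Definition lex_lt (r s : seqs) : Prop :=
  exists k, (forall i, (i < k)%nat -> r i = s i) /\ r k = false /\ s k = true.
Definition lex_le (r s : seqs) : Prop := lex_lt r s \/ r = s.

Definition random_variable (X : seqs -> R) : Prop :=
  forall t, measurable (fun s => X s <= t).

Definition lexicographic_like (mu : (seqs -> Prop) -> R) (X : seqs -> R) : Prop :=
  (exists A, measurable A /\ mu A = 1 /\
     (forall s t, A s -> A t -> X s = X t -> s = t)) /\
  (forall s j n, X (shiftn j s) <= X (shiftn n s) <-> lex_le (shiftn j s) (shiftn n s)).

Definition is_perm (d : nat) (r : list nat) : Prop := Permutation r (seq 0 (S d)).

Definition has_pattern (d : nat) (x : nat -> R) (r : list nat) : Prop :=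
  forall l, (1 <= l <= d)%nat ->
    x (nth (l - 1) r 0%nat) >= x (nth l r 0%nat) /\
    (x (nth (l - 1) r 0%nat) = x (nth l r 0%nat) ->
       (nth (l - 1) r 0%nat > nth l r 0%nat)%nat).

(* P_pi: (X(sigma^d s), ..., X(sigma s), X(s)) has pattern pi, i.e. x_i = X(sigma^(d-i) s) *)
Definition P_pat (X : seqs -> R) (d : nat) (r : list nat) (s : seqs) : Prop :=
  has_pattern d (fun i => X (shiftn (d - i) s)) r.

Definition Oset (s : seqs) : Prop :=
  exists n, forall j, shiftn n s j = false.

Definition P_tilde (X : seqs -> R) (d : nat) (r : list nat) (s : seqs) : Prop :=
  P_pat X d r s /\ ~ Oset s.

From Stdlib Require Import Reals List.
From Stdlib Require Import Arith Wf_nat Lra Lia Permutation Classical FunctionalExtensionality.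
Open Scope R_scope.

(** For [s] outside [O] no tail [shiftn k s] is identically [0], so comparing
    [shiftn k s] with [shiftn (S k) s] lexicographically reads off [s k]: a leading [0] makes the shift
    strictly larger, a leading [1] makes it no larger.  A lexicographic-like [X]
    transports this to [s k = 0 <-> X (sigma^k s) < X (sigma^(k+1) s)], and an
    ordinal pattern of [(X (sigma^d s), ..., X s)] fixes all these strict
    comparisons for [k < d]. *)

Lemma shiftn_apply n s j : shiftn n s j = s (n + j)%nat.
Proof.
  revert j; induction n as [|n IHn]; intro j; simpl; [reflexivity|].
  unfold shift; rewrite IHn; f_equal; lia.
Qed.

Lemma not_Oset_tail s k : ~ Oset s -> exists j, shiftn k s j = true.
Proof.
  intros HO; apply NNPP; intros Hnone; apply HO; exists k; intro j.
  destruct (shiftn k s j) eqn:E; [exfalso; eauto | reflexivity].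
Qed.

Lemma least_index_eq (u : seqs) b :
  (exists j, u j = b) -> exists m, u m = b /\ forall i, (i < m)%nat -> u i <> b.
Proof.
  intros Hex.
  destruct (dec_inh_nat_subset_has_unique_least_element (fun j => u j = b))
    as [m [[Hm Hleast] _]]; [intro n; apply classic | exact Hex |].
  exists m; split; [exact Hm|].
  intros i Hi Hu; specialize (Hleast i Hu); lia.
Qed.

Lemma lex_lt_not_le r s : lex_lt r s -> ~ lex_le s r.
Proof.
  intros [k [Hpre [Hr Hs]]] [[k' [Hpre' [Hs' Hr']]] | ->]; [|congruence].
  destruct (lt_eq_lt_dec k k') as [[Hlt | ->] | Hlt].
  - rewrite (Hpre' k Hlt) in Hs; congruence.
  - congruence.
  - rewrite (Hpre k' Hlt) in Hr'; congruence.
Qed.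

Lemma lex_lt_shift_head_false u :
  u 0%nat = false -> (exists j, u j = true) -> lex_lt u (shift u).
Proof.
  intros H0 Hex; destruct (least_index_eq u true Hex) as [[|m] [Hm Hbefore]];
    [congruence|].
  assert (Hzero : forall i, (i <= m)%nat -> u i = false).
  { intros i Hi; destruct (u i) eqn:E; [exfalso; exact (Hbefore i ltac:(lia) E) | reflexivity]. }
  exists m; unfold shift; repeat split; auto.
  intros i Hi; rewrite !Hzero by lia; reflexivity.
Qed.

Lemma lex_le_shift_head_true u : u 0%nat = true -> lex_le (shift u) u.
Proof.
  intros H0; destruct (classic (exists j, u j = false)) as [Hex | Hnone].
  - left; destruct (least_index_eq u false Hex) as [[|m] [Hm Hbefore]];
      [congruence|].
    assert (Hone : forall i, (i <= m)%nat -> u i = true).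
    { intros i Hi; destruct (u i) eqn:E; [reflexivity | exfalso; exact (Hbefore i ltac:(lia) E)]. }
    exists m; unfold shift; repeat split; auto.
    intros i Hi; rewrite !Hone by lia; reflexivity.
  - right; extensionality j; unfold shift.
    assert (Hall : forall i, u i = true).
    { intro i; destruct (u i) eqn:E; [reflexivity | exfalso; eauto]. }
    rewrite !Hall; reflexivity.
Qed.

Lemma pattern_chain d (x : nat -> R) r :
  has_pattern d x r -> forall p q, (p < q <= d)%nat ->
  x (nth p r 0%nat) >= x (nth q r 0%nat) /\
  (x (nth p r 0%nat) = x (nth q r 0%nat) -> (nth p r 0%nat > nth q r 0%nat)%nat).
Proof.
  intros Hx p q [Hpq Hqd]; revert Hqd; induction Hpq as [|q Hpq IH]; intros Hqd.
  - specialize (Hx (S p) ltac:(lia)); rewrite Nat.sub_succ, Nat.sub_0_r in Hx; exact Hx.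
  - destruct (IH ltac:(lia)) as [Hge Htie].
    specialize (Hx (S q) ltac:(lia)); rewrite Nat.sub_succ, Nat.sub_0_r in Hx.
    destruct Hx as [Hge' Htie']; split; [lra|].
    intros Heq; specialize (Htie ltac:(lra)); specialize (Htie' ltac:(lra)); lia.
Qed.

Lemma perm_position d r i : is_perm d r -> (i <= d)%nat ->
  exists p, (p <= d)%nat /\ nth p r 0%nat = i.
Proof.
  intros Hr Hi.
  assert (Hin : In i r) by (apply (Permutation_in _ (Permutation_sym Hr)), in_seq; lia).
  destruct (In_nth r i 0%nat Hin) as [p [Hp Hnth]].
  rewrite (Permutation_length Hr), length_seq in Hp; exists p; split; [lia | exact Hnth].
Qed.

(* Ties are broken towards the larger index, so only comparisons [x i < x j]
   with [j < i] are determined by the pattern. *)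
Lemma pattern_lt_transfer d r (x y : nat -> R) i j :
  is_perm d r -> has_pattern d x r -> has_pattern d y r ->
  (j < i <= d)%nat -> x i < x j -> y i < y j.
Proof.
  intros Hr Hx Hy Hji Hlt.
  destruct (perm_position d r i Hr ltac:(lia)) as [p [Hp Hpi]].
  destruct (perm_position d r j Hr ltac:(lia)) as [q [Hq Hqj]].
  destruct (lt_eq_lt_dec p q) as [[Hpq | ->] | Hqp].
  - destruct (pattern_chain d x r Hx p q ltac:(lia)) as [Hge _].
    rewrite Hpi, Hqj in Hge; lra.
  - lia.
  - destruct (pattern_chain d y r Hy q p ltac:(lia)) as [Hge Htie].
    rewrite Hpi, Hqj in Hge, Htie.
    destruct (Rle_lt_or_eq_dec (y i) (y j)) as [Hyl | Hye]; [lra | lra | ].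
    specialize (Htie (eq_sym Hye)); lia.
Qed.

Definition prefix (s : seqs) (n : nat) : list bool := map s (seq 0 n).

Lemma length_prefix s n : length (prefix s n) = n.
Proof. unfold prefix; rewrite length_map, length_seq; reflexivity. Qed.

Lemma cylinder_prefix s t n :
  (forall i, (i < n)%nat -> t i = s i) -> cylinder (prefix s n) t.
Proof.
  intros Hagree i Hi; rewrite length_prefix in Hi; unfold prefix.
  rewrite (nth_indep _ false (s 0%nat)) by (rewrite length_map, length_seq; exact Hi).
  rewrite map_nth, seq_nth by exact Hi; apply Hagree, Hi.
Qed.

Section LexicographicLike.

Variable X : seqs -> R.
Hypothesis X_lex : forall s j n,
  X (shiftn j s) <= X (shiftn n s) <-> lex_le (shiftn j s) (shiftn n s).

Lemma symbol_false_iff_X_increases s k :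
  ~ Oset s -> s k = false <-> X (shiftn k s) < X (shiftn (S k) s).
Proof.
  intros HO.
  assert (Hhead : shiftn k s 0%nat = s k) by (rewrite shiftn_apply; f_equal; lia).
  split.
  - intros Hk; apply Rnot_le_lt; intros Hle.
    apply (lex_lt_not_le (shiftn k s) (shiftn (S k) s)).
    + apply lex_lt_shift_head_false; [congruence | apply not_Oset_tail, HO].
    + apply X_lex, Hle.
  - intros Hlt; destruct (s k) eqn:Hk; [exfalso | reflexivity].
    assert (Hle : lex_le (shiftn (S k) s) (shiftn k s))
      by (apply lex_le_shift_head_true; congruence).
    apply X_lex in Hle; lra.
Qed.

Lemma P_tilde_symbols_agree d r s t k :
  is_perm d r -> P_tilde X d r s -> P_tilde X d r t -> (k < d)%nat -> s k = t k.
Proof.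
  intros Hr [Ps Os] [Pt Ot] Hk.
  assert (Htransfer : forall u v, P_pat X d r u -> P_pat X d r v ->
    X (shiftn k u) < X (shiftn (S k) u) -> X (shiftn k v) < X (shiftn (S k) v)).
  { intros u v Pu Pv Hlt.
    pose proof (pattern_lt_transfer d r _ _ (d - k) (d - S k) Hr Pu Pv ltac:(lia))
      as Htr; cbv beta in Htr.
    replace (d - (d - k))%nat with k in Htr by lia.
    replace (d - (d - S k))%nat with (S k) in Htr by lia.
    exact (Htr Hlt). }
  pose proof (symbol_false_iff_X_increases s k Os) as Hs.
  pose proof (symbol_false_iff_X_increases t k Ot) as Ht.
  destruct (s k), (t k); try reflexivity; exfalso.
  - discriminate (proj2 Hs (Htransfer t s Pt Ps (proj1 Ht eq_refl))).
  - discriminate (proj2 Ht (Htransfer s t Ps Pt (proj1 Hs eq_refl))).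
Qed.

End LexicographicLike.

Theorem lemma7 (p : bool -> R) (Q : bool -> bool -> R) (mu : (seqs -> Prop) -> R)
  (X : seqs -> R) (d : nat)
  (HQ : stochastic Q) (Hp : stationary_pos p Q) (Hmu : markov_measure p Q mu)
  (Herg : ergodic mu) (HXrv : random_variable X) (HX : lexicographic_like mu X)
  (Hd : (1 <= d)%nat) :
  forall (pi : list nat), is_perm d pi ->
    ~ (forall s, P_tilde X d pi s <-> Oset s) ->
    exists a : list bool, length a = d /\
      (forall s, P_tilde X d pi s -> cylinder a s).
Proof.
  intros pi Hpi _; destruct HX as [_ X_lex].
  destruct (classic (exists s0, P_tilde X d pi s0)) as [[s0 Hs0] | Hempty].
  - exists (prefix s0 d); split; [apply length_prefix|].
    intros s Hs; apply cylinder_prefix; intros i Hi.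
    exact (P_tilde_symbols_agree X X_lex d pi s s0 i Hpi Hs Hs0 Hi).
  - exists (repeat false d); split; [apply repeat_length|].
    intros s Hs; exfalso; eauto.
Qed.
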